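(* Let $l_1,l_2,l_3$ be positive integers with $l_1=\min\{l_1,l_2,l_3\}$, $l_2\ge 2$, $l_3\ge 2$, let $G=\Theta(l_1,l_2,l_3)$, and let $L$ be an $m$-assignment for $G$ with $m\ge 3$. Suppose $q$ and $s$ are adjacent vertices of $G$, $x\in L(q)$, $y\in L(s)$, and $x\ne y$. Then there are at least $(m-1)^{l_1+l_2+l_3-5}(m-2)^2$ proper $L$-colorings of $G$ that color $q$ with $x$ and $s$ with $y$.
   Context: For positive integers $l_1,l_2,l_3$, the theta graph $\Theta(l_1,l_2,l_3)$ consists of two end vertices joined by three internally disjoint paths of lengths (numbers of edges) $l_1,l_2,l_3$. An $m$-assignment $L$ for a graph $G$ assigns to each vertex $v$ a set $L(v)$ of exactly $m$ colors; a proper $L$-coloring is a proper vertex coloring $f$ of $G$ with $f(v)\in L(v)$ for every vertex $v$. *)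

From mathcomp Require Import all_boot.
Set Implicit Arguments. Unset Strict Implicit. Unset Printing Implicit Defensive.

(* Vertex 0 and vertex 1 are the two end vertices.  The internal vertices of
   path k (k = 1,2,3) are consecutive numbers starting at offset o_k:
     o_1 = 2, o_2 = 2 + (l1-1), o_3 = 2 + (l1-1) + (l2-1).
   Path k is the vertex sequence 0, o_k, o_k+1, ..., o_k + l_k - 2, 1,
   which has l_k edges. *)

Definition theta_nv (l1 l2 l3 : nat) : nat := (l1 + l2 + l3).-1.

Definition theta_path (o l : nat) : seq nat := 0 :: rcons (iota o l.-1) 1.

Definition theta_paths (l1 l2 l3 : nat) : seq (seq nat) :=
  [:: theta_path 2 l1;
      theta_path (2 + l1.-1) l2;
      theta_path (2 + l1.-1 + l2.-1) l3].

Definition path_edges (s : seq nat) : seq (nat * nat) := zip s (behead s).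

Definition theta_adj_nat (l1 l2 l3 : nat) (x y : nat) : bool :=
  has (fun p => ((x, y) \in path_edges p) || ((y, x) \in path_edges p))
      (theta_paths l1 l2 l3).

Definition theta_adj (l1 l2 l3 : nat) : rel 'I_(theta_nv l1 l2 l3) :=
  fun x y => theta_adj_nat l1 l2 l3 (val x) (val y).

Definition proper_L_coloring (V C : finType) (e : rel V) (L : V -> {set C})
  (f : {ffun V -> C}) : bool :=
  [forall v, f v \in L v] && [forall u, forall v, e u v ==> (f u != f v)].
Arguments theta_adj {l1 l2 l3}.

From Pilot Require Import Defs.
From mathcomp Require Import all_boot zify.
Set Implicit Arguments. Unset Strict Implicit. Unset Printing Implicit Defensive.

(* Greedy colouring.  Colour q and s first, then the other vertices one at a
   time; a vertex with d already coloured neighbours has at least m - d free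
   colours in its list.  Walking from the edge qs along its path in both
   directions up to the end vertices, and then along each of the two other paths
   from one end vertex to the other, every vertex meets at most one coloured
   neighbour, except the vertex closing each of the two other paths, which meets
   two.  With n = l1 + l2 + l3 - 1 vertices this gives at least
   (m-1)^(n-4) (m-2)^2 colourings. *)

Section GreedyColoring.
Variables (V C : finType) (e : rel V) (L : V -> {set C}) (m : nat).
Hypotheses (e_sym : symmetric e) (e_irr : irreflexive e).
Hypothesis card_L : forall v, #|L v| = m.
Variables (q s : V) (x y : C).

(* Proper L-colourings of the subgraph induced by S extending q |-> x, s |-> y;
   vertices outside S carry the dummy colour x. *)
Definition colorings_on (S : {set V}) : {set {ffun V -> C}} :=
  [set f : {ffun V -> C} | [&& [forall v in S, f v \in L v],
              [forall u in S, forall v in S, e u v ==> (f u != f v)],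
              [forall v in ~: S, f v == x], f q == x & f s == y]].

Lemma colorings_onP (S : {set V}) (f : {ffun V -> C}) : reflect
  [/\ {in S, forall v, f v \in L v}, {in S &, forall u v, e u v -> f u != f v},
      {in ~: S, forall v, f v = x}, f q = x & f s = y]
  (f \in colorings_on S).
Proof.
rewrite inE; apply: (iffP and5P) => [[/forall_inP fL /forall_inP fP /forall_inP fx /eqP fq /eqP fs]
                                    | [fL fP fx -> ->]]; split=> //.
- by move=> u v uS vS; move: (fP u uS) => /forall_inP/(_ v vS)/implyP.
- by move=> v /fx/eqP.
- exact/forall_inP.
- by apply/forall_inP=> u uS; apply/forall_inP=> v vS; apply/implyP; apply: fP.
- by apply/forall_inP=> v /fx ->.
Qed.

Definition recolor (v : V) (c : C) (f : {ffun V -> C}) : {ffun V -> C} :=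
  [ffun w => if w == v then c else f w].

Section AddVertex.
Variables (S : {set V}) (v : V).
Hypotheses (qS : q \in S) (sS : s \in S) (vS : v \notin S).

Let neq_v w : w \in S -> (w == v) = false.
Proof. by move=> wS; apply: contraNF vS => /eqP <-. Qed.

Lemma recolor_restrict f : f \in colorings_on (v |: S) -> recolor v x f \in colorings_on S.
Proof.
move=> /colorings_onP[fL fP fx fq fs]; apply/colorings_onP; split.
- by move=> w wS; rewrite ffunE neq_v //; apply: fL; rewrite in_setU1 wS orbT.
- move=> u w uS wS euw; rewrite !ffunE !neq_v //.
  by apply: fP; rewrite // in_setU1 ?uS ?wS orbT.
- move=> w; rewrite ffunE; case: eqP => // /eqP wv wS.
  by apply: fx; rewrite !inE negb_or wv; rewrite inE in wS.
- by rewrite ffunE neq_v.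
- by rewrite ffunE neq_v.
Qed.

Lemma recolor_extend f c : f \in colorings_on S ->
  c \in L v :\: f @: [set u in S | e u v] -> recolor v c f \in colorings_on (v |: S).
Proof.
move=> /colorings_onP[fL fP fx fq fs] /setDP[cL cN]; apply/colorings_onP; split.
- by move=> w; rewrite in_setU1 ffunE; case: eqP => [-> | _ /= /fL].
- have fresh u : u \in S -> e u v -> c != f u.
    by move=> uS euv; apply: contraNneq cN => ->; apply: imset_f; rewrite inE uS.
  move=> u w; rewrite !in_setU1 !ffunE.
  case: (eqVneq u v) => [->|_]; case: (eqVneq w v) => [->|_] //= uS wS.
  + by rewrite e_irr.
  + by rewrite e_sym; apply: fresh.
  + by rewrite eq_sym; apply: fresh.
  + exact: fP.
- by move=> w; rewrite !inE negb_or ffunE => /andP[/negbTE -> wS]; apply: fx; rewrite inE.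
- by rewrite ffunE neq_v.
- by rewrite ffunE neq_v.
Qed.

Lemma colorings_on_add :
  #|colorings_on S| * (m - #|[set u in S | e u v]|) <= #|colorings_on (v |: S)|.
Proof.
set N := [set u in S | e u v].
rewrite -[#|colorings_on (v |: S)|]sum1_card.
rewrite (partition_big (recolor v x) (mem (colorings_on S))) => [|f]; last exact: recolor_restrict.
rewrite -sum_nat_const; apply: leq_sum => f fS; rewrite sum1dep_card.
have recolor_inj : injective (recolor v ^~ f).
  by move=> c c' /ffunP/(_ v); rewrite !ffunE eqxx.
have fv : f v = x by case/colorings_onP: fS => _ _ fx _ _; apply: fx; rewrite inE.
apply: (@leq_trans #|L v :\: f @: N|).
  by rewrite cardsD card_L leq_sub2l // (leq_trans (subset_leq_card (subsetIr _ _))) ?leq_imset_card.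
rewrite -(card_imset _ recolor_inj); apply/subset_leq_card/subsetP => _ /imsetP[c cN ->].
rewrite inE recolor_extend //=; apply/eqP/ffunP => w; rewrite !ffunE.
by case: eqP => // ->.
Qed.

End AddVertex.

Local Notation Q := [set q; s].
Hypotheses (q_ne_s : q != s) (x_ne_y : x != y) (xL : x \in L q) (yL : y \in L s).

Lemma colorings_on_pair : 0 < #|colorings_on Q|.
Proof.
apply/card_gt0P; exists [ffun w => if w == s then y else x]; apply/colorings_onP.
have sq : (q == s) = false by apply/negbTE.
split.
- by move=> w /set2P[] ->; rewrite ffunE ?sq ?eqxx.
- move=> u w /set2P[] -> /set2P[] ->; rewrite ?e_irr // !ffunE ?sq eqxx // => _.
  by rewrite eq_sym.
- by move=> w; rewrite !inE negb_or ffunE => /andP[_ /negbTE ->].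
- by rewrite ffunE sq.
- by rewrite ffunE eqxx.
Qed.

Variable r : V -> nat.
Hypothesis r_inj : {in ~: Q &, injective r}.

Definition earlier_nbrs v := [set u | ((u \in Q) || (r u < r v)) && e u v].
Definition rank_prefix t := Q :|: [set u | r u < t].

Lemma in_rank_prefix t u : (u \in rank_prefix t) = (u \in Q) || (r u < t).
Proof. by rewrite /rank_prefix in_setU in_set. Qed.

Lemma rank_prefix_colorings t :
  \prod_(v in ~: Q | r v < t) (m - #|earlier_nbrs v|) <= #|colorings_on (rank_prefix t)|.
Proof.
elim: t => [|t IH].
  rewrite big_pred0 => [|v]; last by rewrite andbF.
  rewrite (_ : rank_prefix 0 = Q) ?colorings_on_pair //.
  by apply/setP=> u; rewrite in_rank_prefix orbF.
have ltS u : (r u < t.+1) = (r u == t) || (r u < t) by rewrite ltnS leq_eqVlt.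
case: (pickP [pred v | (v \notin Q) && (r v == t)]) => [v /andP[vQ /eqP rv] | no_t]; last first.
  have ltS' u : u \notin Q -> (r u < t.+1) = (r u < t).
    by move=> uQ; rewrite ltS; move: (no_t u); rewrite /= uQ /= => ->.
  rewrite (eq_bigl [pred u | (u \in ~: Q) && (r u < t)]) => [|u]; last first.
    by rewrite /= in_setC; case: (boolP (u \in Q)) => // /ltS'.
  rewrite (_ : rank_prefix t.+1 = rank_prefix t) //; apply/setP=> u.
  by rewrite !in_rank_prefix; case: (boolP (u \in Q)) => // /ltS'.
have same_rank u : u \notin Q -> r u = t -> u = v.
  by move=> uQ ru; apply: r_inj; rewrite ?in_setC ?ru ?rv.
have ltS_v u : u \notin Q -> (r u < t.+1) = (u == v) || (r u < t).
  move=> uQ; rewrite ltS; case: (eqVneq u v) => [-> | uv]; first by rewrite rv eqxx.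
  by case: eqP => // /(same_rank u uQ) uv'; rewrite uv' eqxx in uv.
rewrite (bigD1 v) /=; last by rewrite inE vQ rv ltnSn.
rewrite (eq_bigl [pred u | (u \in ~: Q) && (r u < t)]) => [|u]; last first.
  rewrite /= in_setC; case: (boolP (u \in Q)) => //= /ltS_v ->.
  by case: eqVneq => [->|_]; rewrite ?andbF ?andbT ?rv ?ltnn.
have -> : rank_prefix t.+1 = v |: rank_prefix t.
  apply/setP=> u; rewrite in_setU1 !in_rank_prefix.
  by case: (boolP (u \in Q)) => [_ | /ltS_v ->] /=; rewrite ?orbT.
have -> : earlier_nbrs v = [set u in rank_prefix t | e u v].
  by apply/setP=> u; rewrite !inE rv.
rewrite mulnC; apply: leq_trans (colorings_on_add _ _ _); rewrite ?leq_mul2r ?IH ?orbT //.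
- by rewrite !inE eqxx.
- by rewrite !inE eqxx orbT.
- by rewrite in_rank_prefix negb_or vQ rv ltnn.
Qed.

Lemma greedy_colorings_count :
  \prod_(v in ~: Q) (m - #|earlier_nbrs v|) <=
  #|[set f | proper_L_coloring e L f && (f q == x) && (f s == y)]|.
Proof.
set T := (\max_u r u).+1.
have rT u : r u < T by rewrite ltnS; apply: leq_bigmax.
rewrite (eq_bigl [pred v | (v \in ~: Q) && (r v < T)]) => [|v]; last by rewrite /= rT andbT.
apply: leq_trans (rank_prefix_colorings T) _; apply: subset_leq_card; apply/subsetP=> f.
have prefixT : rank_prefix T = setT by apply/setP=> u; rewrite !inE rT orbT.
rewrite prefixT => /colorings_onP[fL fP _ fq fs]; rewrite inE fq fs !eqxx !andbT.
apply/andP; split; apply/forallP=> u; first by rewrite fL ?inE.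
by apply/forallP=> w; apply/implyP; apply: fP; rewrite inE.
Qed.

End GreedyColoring.


Lemma prod_sub_degree_ge (T : finType) (A B : {set T}) (d : T -> nat) (m : nat) :
  #|B| <= 2 <= #|A| -> {in A, forall v, d v <= 1 + (v \in B)} ->
  m.-1 ^ (#|A| - 2) * (m - 2) ^ 2 <= \prod_(v in A) (m - d v).
Proof.
move=> /andP[B2 A2] dB.
apply: leq_trans (leq_prod (fun v vA => leq_sub2l m (dB v vA))).
rewrite (bigID (mem B)) /=.
rewrite (eq_bigl (mem (A :&: B))) => [|v]; last by rewrite !inE andbC.
rewrite [X in _ <= _ * X](eq_bigl (mem (A :\: B))) => [|v]; last by rewrite !inE andbC.
rewrite (eq_bigr (fun=> m - 2)) => [|v /setIP[_ ->] //].
rewrite [X in _ <= _ * X](eq_bigr (fun=> m.-1)) => [|v /setDP[_ /negbTE->]]; last by rewrite subn1.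
rewrite !prod_nat_const cardsD.
have := subset_leq_card (subsetIl A B).
have : #|A :&: B| <= 2 by rewrite (leq_trans (subset_leq_card (subsetIr _ _))).
set a := #|A|; set b := #|A :&: B| => b2 ba.
have -> : a - b = (a - 2) + (2 - b) by lia.
rewrite expnD mulnCA leq_mul2l; apply/orP; right.
have -> : (m - 2) ^ 2 = (m - 2) ^ (2 - b) * (m - 2) ^ b by rewrite -expnD; congr (_ ^ _); lia.
rewrite mulnC leq_mul2l; apply/orP; right.
by case: (2 - b) => [|k] //; rewrite leq_exp2r //; lia.
Qed.

Lemma card_le_count n (A : {set 'I_n}) (p : pred nat) (s : seq nat) :
  {in A, forall u, (val u \in s) && p (val u)} -> #|A| <= count p s.
Proof.
move=> As; rewrite cardE -size_filter -(size_map val).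
apply: uniq_leq_size; first by rewrite map_inj_uniq ?enum_uniq //; exact: val_inj.
move=> w /mapP[u]; rewrite mem_enum => /As /andP[us pu] ->.
by rewrite mem_filter pu us.
Qed.

Lemma path_edgesP (p : seq nat) a b : (a, b) \in path_edges p ->
  exists2 i, i.+1 < size p & (a, b) = (nth 0 p i, nth 0 p i.+1).
Proof.
elim: p => [|z [|w p] IH] //=; rewrite inE => /orP[/eqP -> | /IH[i i_lt ab]]; first by exists 0.
by exists i.+1.
Qed.

Definition other_path1 k := if k == 0 then 1 else 0.
Definition other_path2 k := if k == 2 then 1 else 2.

Lemma other_pathsP k k' : k < 3 -> k' < 3 ->
  (k' != k) = (k' == other_path1 k) || (k' == other_path2 k).
Proof. by case: k => [|[|[|]]] //; case: k' => [|[|[|]]]. Qed.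

Lemma other_paths_spec k : k < 3 ->
  [/\ other_path1 k < 3, other_path1 k != k, other_path2 k < 3, other_path2 k != k
    & 0 < other_path2 k].
Proof. by case: k => [|[|[|]]]. Qed.

Lemma count_pair_le (p : pred nat) a b (c : bool) :
  ~~ p a || ~~ p b || c -> count p [:: a; b] <= 1 + c.
Proof. by rewrite /=; case: (p a); case: (p b); case: c. Qed.

Lemma count_iota3 (p : pred nat) (f : nat -> nat) k : k < 3 ->
  count p [seq f k' | k' <- iota 0 3] = p (f k) + p (f (other_path1 k)) + p (f (other_path2 k)).
Proof.
by rewrite /other_path1 /other_path2; case: k => [|[|[|]]] //= _;
  case: (p (f 0)); case: (p (f 1)); case: (p (f 2)).
Qed.

Ltac case_ifs := repeat match goal with
  | |- context [if ?b then _ else _] => let Hb := fresh "Hb" in case: (boolP b) => Hb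
  | H : context [if ?b then _ else _] |- _ =>
      let Hb := fresh "Hb" in move: H; case: (boolP b) => Hb H
  end.

Section ThetaGraph.
Variables l1 l2 l3 : nat.
Hypotheses (l1_gt0 : 0 < l1) (l2_gt1 : 1 < l2) (l3_gt1 : 1 < l3).

Local Notation n := (theta_nv l1 l2 l3).

(* Paths are indexed 0, 1, 2 here (1, 2, 3 in Defs); path_vertex k i is vertex i
   of path k, and path_of, path_pos recover k and i from an internal vertex. *)
Definition path_len k := if k == 0 then l1 else if k == 1 then l2 else l3.
Definition path_offset k :=
  if k == 0 then 2 else if k == 1 then 2 + l1.-1 else 2 + l1.-1 + l2.-1.
Definition path_vertex k i :=
  if i == 0 then 0 else if i < path_len k then path_offset k + i.-1 else 1.
Definition path_of v := if v < path_offset 1 then 0 else if v < path_offset 2 then 1 else 2.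
Definition path_pos v := (v - path_offset (path_of v)).+1.

Local Notation P := path_vertex.

Ltac theta_arith :=
  unfold theta_nv, path_pos, path_of, path_vertex, path_offset, path_len in *; simpl in *;
  case_ifs; lia.

Lemma path_len_gt0 k : 0 < path_len k.
Proof. theta_arith. Qed.

Lemma path_len_lt k : path_len k < n.
Proof. theta_arith. Qed.

Lemma n_ge4 : 4 <= n.
Proof. theta_arith. Qed.

Lemma path_vertex0 k : P k 0 = 0.
Proof. by []. Qed.

Lemma path_vertex_len k : P k (path_len k) = 1.
Proof. by rewrite /path_vertex ltnn; case: (path_len k) (path_len_gt0 k). Qed.

Lemma path_vertex_succ k i : 0 < i -> i.+1 < path_len k -> P k i.+1 = (P k i).+1.
Proof. theta_arith. Qed.

Lemma path_vertex_inj k i i' : i <= path_len k -> i' <= path_len k -> P k i = P k i' -> i = i'.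
Proof. theta_arith. Qed.

Lemma eq_path_vertex k i i' : i <= path_len k -> i' <= path_len k ->
  (P k i == P k i') = (i == i').
Proof. by move=> i_le i'_le; apply/eqP/eqP => [/path_vertex_inj -> | ->]. Qed.

Lemma path_len_gt1 k : 0 < k -> 1 < path_len k.
Proof. theta_arith. Qed.

Lemma path_vertex_internal k i : k < 3 -> 0 < i < path_len k ->
  [/\ 2 <= P k i, path_of (P k i) = k & path_pos (P k i) = i].
Proof. by case: k => [|[|[|]]] // _ i_int; split; theta_arith. Qed.

Lemma internal_vertex v : 2 <= v < n ->
  [/\ path_of v < 3, 0 < path_pos v < path_len (path_of v) & P (path_of v) (path_pos v) = v].
Proof. by move=> v_int; split; theta_arith. Qed.

Lemma path_vertex_other k k' i i' : k < 3 -> k' < 3 -> k' != k ->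
  0 < i' < path_len k' -> i <= path_len k -> P k' i' != P k i.
Proof.
move=> k_lt3 k'_lt3 k'k i'_int i_le; have [v_ge2 v_path _] := path_vertex_internal k'_lt3 i'_int.
have [->|i_gt0] := posnP i; first by rewrite path_vertex0; lia.
case: (ltngtP i (path_len k)) => [i_lt | | ->]; [| lia | by rewrite path_vertex_len; lia].
have i_int : 0 < i < path_len k by rewrite i_gt0 i_lt.
have [_ w_path _] := path_vertex_internal k_lt3 i_int.
by apply: contra_neq k'k => same; rewrite -v_path same w_path.
Qed.

Lemma theta_pathsE :
  theta_paths l1 l2 l3 = [seq theta_path (path_offset k) (path_len k) | k <- iota 0 3].
Proof. by []. Qed.

Lemma size_theta_path k : size (theta_path (path_offset k) (path_len k)) = (path_len k).+1.
Proof. by rewrite /theta_path /= size_rcons size_iota prednK ?path_len_gt0. Qed.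

Lemma nth_theta_path k i : i <= path_len k ->
  nth 0 (theta_path (path_offset k) (path_len k)) i = P k i.
Proof.
case: i => [|i] // i_le; rewrite /theta_path /= nth_rcons size_iota /path_vertex /=.
have [i_lt|i_ge] := ltnP i (path_len k).-1; first by rewrite nth_iota // ifT //; lia.
by rewrite ifT ?ifF //; lia.
Qed.

Lemma theta_adj_edge u v : theta_adj_nat l1 l2 l3 u v -> exists k i,
  [/\ k < 3, i < path_len k & (u, v) = (P k i, P k i.+1) \/ (v, u) = (P k i, P k i.+1)].
Proof.
rewrite /theta_adj_nat theta_pathsE has_map => /hasP[k]; rewrite mem_iota => /= k_lt3.
by case/orP=> /path_edgesP[i]; rewrite size_theta_path ltnS => i_lt;
  rewrite !nth_theta_path ?(ltnW i_lt) // => edge; exists k, i; split; auto.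
Qed.

Lemma theta_adj_nat_sym : symmetric (theta_adj_nat l1 l2 l3).
Proof. by move=> u v; apply: eq_has => p; rewrite orbC. Qed.

Lemma theta_adj_nat_irr : irreflexive (theta_adj_nat l1 l2 l3).
Proof.
move=> v; apply/negbTE/negP => /theta_adj_edge[k [i [_ i_lt [] [vi vi1]]]];
  by have := path_vertex_inj (ltnW i_lt) i_lt; rewrite -vi vi1 => /(_ erefl); lia.
Qed.

Definition end_nbr v k := P k (if v == 0 then 1 else (path_len k).-1).

Definition theta_nbrs v :=
  if v <= 1 then [seq end_nbr v k | k <- iota 0 3]
  else [:: P (path_of v) (path_pos v).-1; P (path_of v) (path_pos v).+1].

Lemma theta_nbrs_internal v : 1 < v ->
  theta_nbrs v = [:: P (path_of v) (path_pos v).-1; P (path_of v) (path_pos v).+1].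
Proof. by move=> v_gt1; rewrite /theta_nbrs leqNgt v_gt1. Qed.

Lemma theta_nbrs_adj u v : theta_adj_nat l1 l2 l3 u v -> u \in theta_nbrs v.
Proof.
have end_nbr_in w k : w <= 1 -> k < 3 -> end_nbr w k \in theta_nbrs w.
  by move=> w_le k_lt3; rewrite /theta_nbrs w_le map_f // mem_iota.
case/theta_adj_edge=> k [i [k_lt3 i_lt [] [-> ->]]].
- have [i1_lt | i1_eq] := ltnP i.+1 (path_len k).
    have i1_int : 0 < i.+1 < path_len k by [].
    have [v_gt1 path_v pos_v] := path_vertex_internal k_lt3 i1_int.
    by rewrite theta_nbrs_internal // path_v pos_v mem_head.
  have len_eq : path_len k = i.+1 by apply/eqP; rewrite eqn_leq i1_eq.
  by rewrite -len_eq path_vertex_len (_ : P k i = end_nbr 1 k) ?end_nbr_in // /end_nbr len_eq.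
- have [->|i_gt0] := posnP i; first exact: (end_nbr_in 0 k).
  have i_int : 0 < i < path_len k by rewrite i_gt0.
  have [v_gt1 path_v pos_v] := path_vertex_internal k_lt3 i_int.
  by rewrite theta_nbrs_internal // path_v pos_v !inE eqxx orbT.
Qed.

Section Rank.
Variables k j : nat.
Hypotheses (k_lt3 : k < 3) (j_lt : j < path_len k).

(* The colouring order: from the edge P k j -- P k j.+1 forward along path k up
   to the end vertex 1, then backward from the edge down to the end vertex 0,
   then the two other paths from 0 towards 1. *)
Definition rank v :=
  if v == 0 then 2 * path_len k else if v == 1 then path_len k
  else if path_of v == k then
    (if j < path_pos v then path_pos v else 2 * path_len k - path_pos v)
  else 2 * n + v.

Lemma rank_internal v : 1 < v -> rank v =
  if path_of v == k then (if j < path_pos v then path_pos v else 2 * path_len k - path_pos v)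
  else 2 * n + v.
Proof. by case: v => [|[|v]]. Qed.

Lemma rank_path_vertex i : i <= path_len k ->
  rank (P k i) = if j < i then i else 2 * path_len k - i.
Proof.
move=> i_le; have [->|i_gt0] := posnP i; first by rewrite path_vertex0 /rank /=; lia.
case: (ltngtP i (path_len k)) => [i_lt | | ->]; [| lia | by rewrite path_vertex_len /rank /= j_lt].
have i_int : 0 < i < path_len k by rewrite i_gt0.
have [v_gt1 path_v pos_v] := path_vertex_internal k_lt3 i_int.
by rewrite rank_internal // path_v eqxx pos_v.
Qed.

Lemma rank_other_path k' i : k' < 3 -> k' != k -> 0 < i < path_len k' ->
  rank (P k' i) = 2 * n + P k' i.
Proof.
move=> k'_lt3 k'k i_int; have [v_ge2 path_v _] := path_vertex_internal k'_lt3 i_int.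
by rewrite rank_internal // path_v (negbTE k'k).
Qed.

Lemma vertex_cases w : w < n -> (exists2 i, i <= path_len k & w = P k i) \/
  exists k' i, [/\ k' < 3, k' != k, 0 < i < path_len k' & w = P k' i].
Proof.
move=> w_lt; have [->|w_gt0] := posnP w; first by left; exists 0.
have [->|w_ne1] := eqVneq w 1; first by left; exists (path_len k); rewrite ?path_vertex_len.
have [k'_lt3 i_int w_eq] : [/\ path_of w < 3, 0 < path_pos w < path_len (path_of w)
  & P (path_of w) (path_pos w) = w] by apply: internal_vertex; lia.
have [k'k | k'k] := eqVneq (path_of w) k.
  by left; exists (path_pos w); rewrite -k'k // ltnW //; case/andP: i_int.
by right; exists (path_of w), (path_pos w).
Qed.

Lemma rank_inj u v : u < n -> v < n -> rank u = rank v -> u = v.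
Proof.
have len_lt := path_len_lt k.
move=> /vertex_cases[[i i_le ->] | [k' [i [k'_lt3 k'k i_int ->]]]]
       /vertex_cases[[i' i'_le ->] | [k'' [i' [k''_lt3 k''k i'_int ->]]]].
- by rewrite !rank_path_vertex // => same; congr P; move: same; case_ifs; lia.
- by rewrite rank_path_vertex // rank_other_path //; case_ifs; lia.
- by rewrite rank_path_vertex // rank_other_path //; case_ifs; lia.
- by rewrite !rank_other_path //; lia.
Qed.

Definition precedes w v := [|| w == P k j, w == P k j.+1 | rank w < rank v].

(* The vertex whose colouring closes the cycle through path k': the last internal
   vertex of k', or, if k' is a single edge, the end vertex that is coloured last. *)
Definition closing_vertex k' :=
  if path_len k' == 1 then (if j == 0 then 1 else 0) else P k' (path_len k').-1.

Definition closing_vertices := [:: closing_vertex (other_path1 k); closing_vertex (other_path2 k)].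

Lemma precedes_other_path v k' i : k' < 3 -> k' != k -> 0 < i < path_len k' ->
  rank v <= 2 * n + P k' i -> precedes (P k' i) v = false.
Proof.
move=> k'_lt3 k'k i_int rank_v; rewrite /precedes rank_other_path // ltnNge rank_v orbF.
by rewrite !(negbTE (path_vertex_other _ _ _ _ _)) // ltnW.
Qed.

Lemma count_precedes_internal v : 1 < v < n -> v != P k j -> v != P k j.+1 ->
  count (precedes^~ v) (theta_nbrs v) <= 1 + (v \in closing_vertices).
Proof.
move=> v_int vj vj1; have [k'_lt3 i_int v_eq] := internal_vertex v_int.
rewrite theta_nbrs_internal; last by case/andP: v_int.
move: (path_of v) (path_pos v) k'_lt3 i_int v_eq vj vj1 => k' i k'_lt3 /andP[i_gt0 i_lt] <- vj vj1.
apply: count_pair_le; case: (eqVneq k' k) => [k'k | k'k].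
  (* On path k the neighbour farther from the edge is coloured later. *)
  subst k'; move: vj vj1; rewrite /precedes !eq_path_vertex ?rank_path_vertex //; try lia.
  by move=> ij ij1; case_ifs; lia.
have [i1_lt | i1_ge] := ltnP i.+1 (path_len k').
  rewrite /= [precedes (P k' i.+1) _](precedes_other_path k'_lt3 k'k) /= ?orbT ?i1_lt //.
  by rewrite rank_other_path ?i_gt0 // path_vertex_succ // leq_add2l.
have -> : P k' i = closing_vertex k'.
  by rewrite /closing_vertex ifF; [congr P | apply/eqP]; lia.
rewrite orbC /closing_vertices !inE.
by move: (other_pathsP k_lt3 k'_lt3); rewrite k'k => /esym/orP[] /eqP ->; rewrite eqxx ?orbT.
Qed.

Lemma count_precedes_end v : v <= 1 -> v != P k j -> v != P k j.+1 ->
  count (precedes^~ v) (theta_nbrs v) <= 1 + (v \in closing_vertices).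
Proof.
move=> v_le1 vj vj1.
have late_end k' : k' < 3 -> k' != k -> precedes (end_nbr v k') v <= (v == closing_vertex k').
  move=> k'_lt3 k'k; rewrite /end_nbr /closing_vertex.
  have [len_gt1 | len_le1] := ltnP 1 (path_len k').
    rewrite precedes_other_path //; first by case_ifs; lia.
    by have := path_len_lt k; rewrite /rank; case_ifs; lia.
  have -> : path_len k' = 1 by have := path_len_gt0 k'; lia.
  case: v v_le1 vj vj1 => [|[|//]] _ vj vj1 /=.
    by rewrite ifF ?leq_b1 //; apply: contraNF vj => /eqP ->.
  rewrite /precedes path_vertex0 (@eq_path_vertex k 0 j) ?(@eq_path_vertex k 0 j.+1) //; try lia.
  by rewrite /rank /= ltnNge leq_pmull // orbF eq_sym; case: (j == 0).
have [o1_lt3 o1_k o2_lt3 o2_k o2_gt0] := other_paths_spec k_lt3.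
have not_closing2 : (v == closing_vertex (other_path2 k)) = false.
  have len_gt1 := path_len_gt1 o2_gt0.
  rewrite /closing_vertex ifF; last by apply/eqP; lia.
  have pos_int : 0 < (path_len (other_path2 k)).-1 < path_len (other_path2 k).
    by apply/andP; split; lia.
  have [v_ge2 _ _] := path_vertex_internal o2_lt3 pos_int.
  by apply/negbTE; rewrite neq_ltn (leq_ltn_trans v_le1 v_ge2).
rewrite /theta_nbrs v_le1 (count_iota3 _ _ k_lt3).
apply: leq_trans (leq_add (leq_add (leq_b1 _) (late_end _ o1_lt3 o1_k)) (late_end _ o2_lt3 o2_k)) _.
by rewrite /closing_vertices !inE not_closing2 orbF addn0.
Qed.

Lemma count_precedes v : v < n -> v != P k j -> v != P k j.+1 ->
  count (precedes^~ v) (theta_nbrs v) <= 1 + (v \in closing_vertices).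
Proof.
move=> v_lt; have [v_le1 | v_gt1] := leqP v 1; first exact: count_precedes_end.
by apply: count_precedes_internal; rewrite v_gt1.
Qed.

End Rank.

Lemma theta_adj_sym : symmetric (@theta_adj l1 l2 l3).
Proof. by move=> u v; apply: theta_adj_nat_sym. Qed.

Lemma theta_adj_irr : irreflexive (@theta_adj l1 l2 l3).
Proof. by move=> v; apply: theta_adj_nat_irr. Qed.

Lemma theta_adj_path_edge (q s : 'I_n) : theta_adj q s -> exists k j,
  [/\ k < 3, j < path_len k &
      forall u : 'I_n, (u \in [set q; s]) = (val u == P k j) || (val u == P k j.+1)].
Proof.
case/theta_adj_edge=> k [j [k_lt3 j_lt qs_edge]]; exists k, j; split=> // u.
by rewrite !inE -!val_eqE /=; case: qs_edge => [[-> ->] | [-> ->]]; rewrite // orbC.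
Qed.

Lemma rank_ord_inj k j : k < 3 -> j < path_len k -> injective (rank k j \o val : 'I_n -> nat).
Proof. by move=> k_lt3 j_lt u v /(rank_inj k_lt3 j_lt (ltn_ord u) (ltn_ord v)) /val_inj. Qed.

Lemma card_earlier_nbrs_theta (q s : 'I_n) k j : k < 3 -> j < path_len k ->
  (forall u : 'I_n, (u \in [set q; s]) = (val u == P k j) || (val u == P k j.+1)) ->
  {in ~: [set q; s], forall v, #|earlier_nbrs theta_adj q s (rank k j \o val) v| <=
     1 + (v \in [set u : 'I_n | val u \in closing_vertices k j])}.
Proof.
move=> k_lt3 j_lt inQ v; rewrite in_setC inQ negb_or => /andP[vj vj1].
rewrite inE; apply: leq_trans (count_precedes k_lt3 j_lt (ltn_ord v) vj vj1).
apply: card_le_count => u; rewrite inE inQ => /andP[earlier adj].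
by rewrite (theta_nbrs_adj adj) /precedes orbA; exact: earlier.
Qed.

End ThetaGraph.

Theorem lemma2p3 (l1 l2 l3 m : nat) (C : finType)
  (L : 'I_(theta_nv l1 l2 l3) -> {set C})
  (q s : 'I_(theta_nv l1 l2 l3)) (x y : C) :
  0 < l1 -> l1 <= l2 -> l1 <= l3 -> 2 <= l2 -> 2 <= l3 ->
  3 <= m -> (forall v, #|L v| = m) ->
  theta_adj q s -> x \in L q -> y \in L s -> x != y ->
  (m.-1 ^ (l1 + l2 + l3 - 5) * (m - 2) ^ 2 <=
   #|[set f : {ffun 'I_(theta_nv l1 l2 l3) -> C} |
       proper_L_coloring (@theta_adj l1 l2 l3) L f && (f q == x) && (f s == y)]|)%N.
Proof.
move=> l1_gt0 _ _ l2_gt1 l3_gt1 _ card_L adj_qs xL yL x_ne_y.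
have [k [j [k_lt3 j_lt inQ]]] := theta_adj_path_edge l1_gt0 l2_gt1 l3_gt1 adj_qs.
have adj_irr := theta_adj_irr l1_gt0 l2_gt1 l3_gt1.
have q_ne_s : q != s by apply: contraTneq adj_qs => ->; rewrite adj_irr.
have rank_inj := in2W (rank_ord_inj l1_gt0 l2_gt1 l3_gt1 k_lt3 j_lt) : {in ~: [set q; s] &, _}.
apply: leq_trans (greedy_colorings_count (@theta_adj_sym l1 l2 l3) adj_irr card_L
  q_ne_s x_ne_y xL yL rank_inj).
have card_Q : #|~: [set q; s]| = theta_nv l1 l2 l3 - 2.
  by have := cardsC [set q; s]; rewrite card_ord cards2 q_ne_s; lia.
rewrite (_ : l1 + l2 + l3 - 5 = #|~: [set q; s]| - 2); last by rewrite card_Q /theta_nv; lia.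
apply: prod_sub_degree_ge (card_earlier_nbrs_theta l1_gt0 l2_gt1 l3_gt1 k_lt3 j_lt inQ).
rewrite card_Q; apply/andP; split; last by have := n_ge4 l1_gt0 l2_gt1 l3_gt1; lia.
apply: (@leq_trans (count predT (closing_vertices l1 l2 l3 k j))) => //.
by apply: card_le_count => u; rewrite inE andbT.
Qed.
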